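(* Let $B$ be a finite skew left brace and let $S$ be a maximal subbrace of $B$. Then either $\zeta(B)\subseteq S$, or $S$ is an ideal of $B$ and $B/S$ is an abelian brace whose group is cyclic of prime order.
   Context: A skew left brace (brace) is a set $B$ with two group structures $(B,+)$ and $(B,\cdot)$ with $a(b+c)=ab-a+ac$; $\lambda_a(b)=-a+ab$. A subbrace is a subset that is a subgroup of both groups; a maximal subbrace is a proper subbrace not contained in any other proper subbrace. An ideal is a subset that is a normal subgroup of both groups and $\lambda_b$-invariant for all $b$. The centre is $\zeta(B)=\{a\in B: a+b=b+a=ab=ba\ \forall b\in B\}$. A brace is abelian if $ab=a+b=b+a$ for all $a,b$. *)

From mathcomp Require Import all_boot.
Set Implicit Arguments. Unset Strict Implicit. Unset Printing Implicit Defensive.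

Record skew_brace (T : finType) := SkewBrace {
  add : T -> T -> T; opp : T -> T; zero : T;
  mul : T -> T -> T; inv : T -> T; one : T;
  addA : forall a b c, add a (add b c) = add (add a b) c;
  add0r : forall a, add zero a = a;
  addr0 : forall a, add a zero = a;
  addNr : forall a, add (opp a) a = zero;
  addrN : forall a, add a (opp a) = zero;
  mulA : forall a b c, mul a (mul b c) = mul (mul a b) c;
  mul1r : forall a, mul one a = a;
  mulr1 : forall a, mul a one = a;
  mulVr : forall a, mul (inv a) a = one;
  mulrV : forall a, mul a (inv a) = one;
  brace_law : forall a b c, mul a (add b c) = add (mul a b) (add (opp a) (mul a c))
}.

Section BraceDefs.
Variables (T : finType) (B : skew_brace T).
Local Notation "a + b" := (add B a b).
Local Notation "- a" := (opp B a).
Local Notation "a * b" := (mul B a b).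

Definition lambda (a b : T) : T := - a + a * b.

Definition subbrace (S : {set T}) : Prop :=
  [/\ zero B \in S /\ one B \in S,
      (forall a b, a \in S -> b \in S -> a + b \in S),
      (forall a, a \in S -> - a \in S),
      (forall a b, a \in S -> b \in S -> a * b \in S) &
      (forall a, a \in S -> inv B a \in S)].

Definition maximal_subbrace (S : {set T}) : Prop :=
  [/\ subbrace S, S != setT &
      forall S' : {set T}, subbrace S' -> S' != setT -> S \subset S' -> S' = S].

Definition ideal (I : {set T}) : Prop :=
  [/\ subbrace I,
      (forall a b, a \in I -> b + a + - b \in I),
      (forall a b, a \in I -> b * a * inv B b \in I) &
      (forall a b, a \in I -> lambda b a \in I)].

Definition centre : {set T} :=
  [set a | [forall b, [&& a + b == b + a, b + a == a * b & a * b == b * a]]].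

Definition coset (I : {set T}) (a : T) : {set T} := [set a + s | s in I].
Definition quotient_elems (I : {set T}) : {set {set T}} := [set coset I a | a in T].

(* B/I is an abelian brace: for all cosets, ab = a+b = b+a in B/I. *)
Definition quotient_abelian (I : {set T}) : Prop :=
  forall a b, coset I (a * b) = coset I (a + b) /\ coset I (a + b) = coset I (b + a).

(* The group of B/I (additive = multiplicative, as B/I is abelian) is cyclic
   of prime order. *)
Definition quotient_cyclic_prime_order (I : {set T}) : Prop :=
  prime #|quotient_elems I| /\
  exists g : T, forall a : T, exists n : nat, coset I a = coset I (iter n (add B g) (zero B)).

End BraceDefs.

From Pilot Require Import Defs.
From mathcomp Require Import all_boot.
Import Defs.
Set Implicit Arguments. Unset Strict Implicit. Unset Printing Implicit Defensive.

(* Suppose the centre of B is not contained in the maximal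
   subbrace S, and pick z in the centre but not in S.  For a central element w,
   "w + b = b + w = wb = bw" for all b, so the natural multiples n*w of w commute
   with everything in both operations and behave like translations; hence
   S + <w> = {n*w + s | s in S} is again a subbrace.  By maximality
   S + <z> = B, i.e. every element has the form n*z + s with s in S.
   From this normal form:
   - conjugation and lambda by n*z + s reduce to those by s, so S is an ideal;
   - sums and products of n*z + s and k*z + t are (n+k)*z + (s+t) and
     (n+k)*z + st, so B/S is abelian, generated by the coset of z;
   - if m is least positive with m*z in S, the cosets of 0, z, ..., (m-1)*z
     are exactly the elements of B/S and pairwise distinct, so |B/S| = m;
   - m is prime: for a proper divisor 1 < d < m, d*z is central and not in S,
     so S + <d*z> = B again, whence z = nd*z modulo S and d divides 1.
   The file develops elementary group facts, natural multiples, central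
   elements, subbraces and cosets, the subbrace S + <w>, and then the four
   consequences above, from which the theorem follows. *)

Section GroupFacts.
Variables (T : finType) (B : skew_brace T).
Local Notation "a ⊕ b" := (add B a b) (at level 50, left associativity).
Local Notation "a ⊗ b" := (mul B a b) (at level 40, left associativity).
Local Notation "0'" := (zero B).

Lemma addKl a b c : a ⊕ b = a ⊕ c -> b = c.
Proof. by move=> e; rewrite -(add0r B b) -(add0r B c) -(addNr B a) -!addA e. Qed.

Lemma opp_unique x y : x ⊕ y = 0' -> opp B x = y.
Proof. by move=> e; rewrite -(addr0 B (opp B x)) -e addA addNr add0r. Qed.

Lemma inv_unique x y : x ⊗ y = one B -> inv B x = y.
Proof. by move=> e; rewrite -(mulr1 B (inv B x)) -e mulA mulVr mul1r. Qed.

Lemma oppD a b : opp B (a ⊕ b) = opp B b ⊕ opp B a.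
Proof. by apply: opp_unique; rewrite -addA (addA B b) addrN add0r addrN. Qed.

Lemma invM a b : inv B (a ⊗ b) = inv B b ⊗ inv B a.
Proof. by apply: inv_unique; rewrite -mulA (mulA B b) mulrV mul1r mulrV. Qed.

(* The two groups of a skew brace share their neutral element:
   1 = 1(0 + 0) = 1*0 - 1 + 1*0 = 0 - 1 + 0 forces 0 = 1. *)
Lemma zero_one : 0' = one B.
Proof.
have e := brace_law B (one B) 0' 0'.
rewrite addr0 !mul1r in e.
have {}e : 0' = opp B (one B) ⊕ 0' by apply: (@addKl 0'); rewrite addr0 -e.
by rewrite -(addrN B (one B)) -(addr0 B (opp B _)) -e addr0.
Qed.

Definition natmul (n : nat) (w : T) : T := iter n (add B w) 0'.

Lemma natmulS n w : natmul n.+1 w = w ⊕ natmul n w.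
Proof. by []. Qed.

Lemma natmulD m n w : natmul (m + n) w = natmul m w ⊕ natmul n w.
Proof. by elim: m => [|m IH]; rewrite ?add0r // addSn !natmulS IH addA. Qed.

Lemma natmulM n d w : natmul (n * d) w = natmul n (natmul d w).
Proof. by elim: n => [|n IH] //; rewrite mulSn natmulD IH. Qed.

Lemma natmul1 w : natmul 1 w = w.
Proof. exact: addr0. Qed.

Lemma natmul_zero n : natmul n 0' = 0'.
Proof. by elim: n => [|n IH] //; rewrite natmulS IH add0r. Qed.

(* Every element has finite additive order, so negatives of multiples are
   again multiples. *)
Lemma natmul_order w : exists2 N, 0 < N & natmul N w = 0'.
Proof.
have inj : injective (add B w) by move=> x y; apply: addKl.
by exists (order (add B w) 0'); [exact: order_gt0 | exact: iter_order].
Qed.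

Lemma opp_natmul w n : exists k, opp B (natmul n w) = natmul k w.
Proof.
have [[|N] // _ hN] := natmul_order w.
by exists (n * N); apply: opp_unique; rewrite -natmulD -mulnS natmulM hN natmul_zero.
Qed.

Definition central (w : T) : Prop :=
  forall b, [/\ w ⊕ b = b ⊕ w, w ⊗ b = w ⊕ b & b ⊗ w = w ⊕ b].

Section Central.
Variables (w : T) (cw : central w).

Lemma centralC b : w ⊕ b = b ⊕ w. Proof. by case: (cw b). Qed.
Lemma central_mull b : w ⊗ b = w ⊕ b. Proof. by case: (cw b). Qed.
Lemma central_mulr b : b ⊗ w = w ⊕ b. Proof. by case: (cw b). Qed.
Lemma central_mulC b : w ⊗ b = b ⊗ w.
Proof. by rewrite central_mull central_mulr. Qed.

Lemma conj_add_central x y : (w ⊕ x) ⊕ y ⊕ opp B (w ⊕ x) = x ⊕ y ⊕ opp B x.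
Proof.
rewrite centralC oppD -(addA B x w y) (centralC y).
by rewrite !addA -(addA B (x ⊕ y) w) addrN addr0.
Qed.

Lemma conj_mul_central x y : (w ⊗ x) ⊗ y ⊗ inv B (w ⊗ x) = x ⊗ y ⊗ inv B x.
Proof.
rewrite central_mulC invM -(mulA B x w y) (central_mulC y).
by rewrite !mulA -(mulA B (x ⊗ y) w) mulrV mulr1.
Qed.

Lemma lambda_central x a : lambda B (w ⊕ x) a = lambda B x a.
Proof.
rewrite /lambda -central_mull -mulA central_mull oppD -addA.
by rewrite central_mull (addA B (opp B w)) addNr add0r.
Qed.

End Central.

Lemma central_zero : central 0'.
Proof. by move=> b; rewrite add0r addr0 zero_one mul1r mulr1. Qed.

Lemma centralD w1 w2 : central w1 -> central w2 -> central (w1 ⊕ w2).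
Proof.
move=> c1 c2 b; have e : w1 ⊕ w2 = w1 ⊗ w2 by rewrite (central_mull c1).
split.
- by rewrite -addA (centralC c2) addA (centralC c1) -addA.
- by rewrite {1}e -mulA (central_mull c2) (central_mull c1) addA.
- by rewrite {1}e mulA (central_mulr c1) (central_mulr c2) addA -(centralC c1).
Qed.

Lemma central_natmul n w : central w -> central (natmul n w).
Proof.
move=> cw; elim: n => [|n IH]; first exact: central_zero.
exact: centralD.
Qed.

Lemma centre_central z : z \in centre B -> central z.
Proof.
rewrite inE => /forallP h b.
by have /and3P[/eqP e1 /eqP e2 /eqP e3] := h b; rewrite -e3 -e2 e1.
Qed.

Lemma inv_natmul w n : central w -> exists k, inv B (natmul n w) = natmul k w.
Proof.
move=> cw; have [k hk] := opp_natmul w n.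
by exists k; apply: inv_unique; rewrite (central_mull (central_natmul n cw)) -hk addrN zero_one.
Qed.

Lemma add_normal w n k s t : central w ->
  (natmul n w ⊕ s) ⊕ (natmul k w ⊕ t) = natmul (n + k) w ⊕ (s ⊕ t).
Proof.
move=> cw; rewrite natmulD -!addA; congr (_ ⊕ _).
by rewrite !addA (centralC (central_natmul k cw)).
Qed.

Lemma mul_normal w n k s t : central w ->
  (natmul n w ⊕ s) ⊗ (natmul k w ⊕ t) = natmul (n + k) w ⊕ (s ⊗ t).
Proof.
move=> cw; have cm j := central_natmul j cw.
rewrite -(central_mull (cm n)) -(central_mull (cm k)) -mulA (mulA B s).
rewrite -(central_mulC (cm k)) -mulA mulA (central_mull (cm n)) -natmulD.
by rewrite (central_mull (cm _)).
Qed.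

Section Subbrace.
Variable S : {set T}.
Hypothesis HS : subbrace B S.

Lemma subbrace0 : 0' \in S. Proof. by case: HS => [[]]. Qed.
Lemma subbraceD a b : a \in S -> b \in S -> a ⊕ b \in S.
Proof. by case: HS => _ h _ _ _; apply: h. Qed.
Lemma subbraceN a : a \in S -> opp B a \in S.
Proof. by case: HS => _ _ h _ _; apply: h. Qed.
Lemma subbraceM a b : a \in S -> b \in S -> a ⊗ b \in S.
Proof. by case: HS => _ _ _ h _; apply: h. Qed.
Lemma subbraceV a : a \in S -> inv B a \in S.
Proof. by case: HS => _ _ _ _ h; apply: h. Qed.

Lemma subbrace_natmul n x : x \in S -> natmul n x \in S.
Proof. by move=> hx; elim: n => [|n IH]; [exact: subbrace0 | exact: subbraceD]. Qed.

Lemma coset_shift y u : u \in S -> coset B S (y ⊕ u) = coset B S y.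
Proof.
move=> hu; apply/setP=> x; apply/imsetP/imsetP => [[s hs ->]|[s hs ->]].
  by exists (u ⊕ s); [exact: subbraceD | rewrite addA].
exists (opp B u ⊕ s); first by apply: subbraceD => //; exact: subbraceN.
by rewrite -addA (addA B u) addrN add0r.
Qed.

Lemma coset_eqP x y : (coset B S x == coset B S y) = (opp B x ⊕ y \in S).
Proof.
apply/eqP/idP => [e | hxy]; last by rewrite -(coset_shift x hxy) addA addrN add0r.
have : y \in coset B S y by apply/imsetP; exists 0'; rewrite ?subbrace0 ?addr0.
by rewrite -e => /imsetP[s hs ->]; rewrite addA addNr add0r.
Qed.

Lemma exists_period w :
  exists2 m, 0 < m & forall k, (natmul k w \in S) = (m %| k).
Proof.
have exP : exists k, (0 < k) && (natmul k w \in S).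
  by have [N N0 hN] := natmul_order w; exists N; rewrite N0 hN subbrace0.
have [m /andP[m0 mS] minm] := ex_minnP exP.
exists m => // k; apply/idP/idP => [hk | /dvdnP[q ->]]; last first.
  by rewrite natmulM subbrace_natmul.
have hr : natmul (k %% m) w \in S.
  have e : natmul (k %% m) w = opp B (natmul (k %/ m * m) w) ⊕ natmul k w.
    by rewrite {3}(divn_eq k m) natmulD addA addNr add0r.
  by rewrite e subbraceD ?subbraceN // natmulM subbrace_natmul.
apply/negPn/negP => ndvd; have pos : 0 < k %% m by rewrite lt0n.
by have := minm _ (introT andP (conj pos hr)); rewrite leqNgt ltn_pmod.
Qed.

Lemma coset_natmul_eq w m : (forall k, (natmul k w \in S) = (m %| k)) ->
  forall i j, (coset B S (natmul i w) == coset B S (natmul j w)) = (i == j %[mod m]).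
Proof.
move=> Hm i j; wlog hij : i j / i <= j.
  move=> le_case; case: (leqP i j) => [|/ltnW] hij; first exact: le_case.
  by rewrite eq_sym le_case // eq_sym.
have e : natmul j w = natmul i w ⊕ natmul (j - i) w by rewrite -natmulD subnKC.
by rewrite coset_eqP e addA addNr add0r Hm eq_sym eqn_mod_dvd.
Qed.

Definition multiples (w : T) : {set T} := [set y | fconnect (add B w) 0' y].

Definition join_multiples (w : T) : {set T} :=
  [set y ⊕ s | y in multiples w, s in S].

Lemma join_multiplesP w x :
  x \in join_multiples w <-> exists n s, s \in S /\ x = natmul n w ⊕ s.
Proof.
split=> [/imset2P[y s] | [n [s [hs ->]]]].
  by rewrite inE => /iter_findex <- hs ->; exists (findex (add B w) 0' y), s.
by apply/imset2P; exists (natmul n w) s; rewrite // inE fconnect_iter.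
Qed.

Lemma join_multiples_subbrace w : central w -> subbrace B (join_multiples w).
Proof.
move=> cw; have cm n := central_natmul n cw.
split.
- by split; apply/join_multiplesP; exists 0, 0'; rewrite subbrace0 add0r ?zero_one.
- move=> a b /join_multiplesP[n [s [hs ->]]] /join_multiplesP[k [t [ht ->]]].
  apply/join_multiplesP; exists (n + k), (s ⊕ t).
  by rewrite add_normal // subbraceD.
- move=> a /join_multiplesP[n [s [hs ->]]]; apply/join_multiplesP.
  have [k hk] := opp_natmul w n.
  by exists k, (opp B s); rewrite oppD hk (centralC (cm k)) subbraceN.
- move=> a b /join_multiplesP[n [s [hs ->]]] /join_multiplesP[k [t [ht ->]]].
  apply/join_multiplesP; exists (n + k), (s ⊗ t).
  by rewrite mul_normal // subbraceM.
- move=> a /join_multiplesP[n [s [hs ->]]]; apply/join_multiplesP.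
  have [k hk] := inv_natmul n cw.
  by exists k, (inv B s); rewrite -(central_mull (cm n)) invM hk
    (central_mulr (cm k)) subbraceV.
Qed.

End Subbrace.

Lemma maximal_join_full S w : maximal_subbrace B S -> central w -> w \notin S ->
  forall b, exists n s, s \in S /\ b = natmul n w ⊕ s.
Proof.
case=> HS _ Hmax cw wS b; apply/(join_multiplesP S w).
have [-> | ne] := eqVneq (join_multiples S w) setT; first by rewrite inE.
have sub : S \subset join_multiples S w.
  by apply/subsetP => s hs; apply/join_multiplesP; exists 0, s; rewrite add0r.
have wJ : w \in join_multiples S w.
  by apply/join_multiplesP; exists 1, 0'; rewrite natmul1 addr0 subbrace0.
by move: wS; rewrite -(Hmax _ (join_multiples_subbrace HS cw) ne sub) wJ.
Qed.

Section CentralGeneration.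
Variables (S : {set T}) (z : T).
Hypotheses (HS : subbrace B S) (cz : central z).
Hypothesis normal_form : forall b, exists n s, s \in S /\ b = natmul n z ⊕ s.

Lemma ideal_of_central_generation : ideal B S.
Proof.
split=> // a b ha; have [n [s [hs ->]]] := normal_form b;
  have cn := central_natmul n cz.
- by rewrite conj_add_central // subbraceD ?subbraceN ?subbraceD.
- by rewrite -central_mull // conj_mul_central // subbraceM ?subbraceV ?subbraceM.
- by rewrite lambda_central // subbraceD ?subbraceN ?subbraceM.
Qed.

Lemma quotient_abelian_of_central_generation : quotient_abelian B S.
Proof.
move=> a b; have [n [s [hs ->]]] := normal_form a.
have [k [t [ht ->]]] := normal_form b.
rewrite mul_normal // !add_normal // !coset_shift ?subbraceD ?subbraceM //.
by rewrite addnC.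
Qed.

(* B/S consists of the m distinct cosets of 0, z, ..., (m-1)*z. *)
Lemma card_quotient_central_generation m : 0 < m ->
  (forall k, (natmul k z \in S) = (m %| k)) -> #|quotient_elems B S| = m.
Proof.
move=> m0 Hm.
have -> : quotient_elems B S = [set coset B S (natmul i z) | i : 'I_m].
  apply/setP=> X; apply/imsetP/imsetP => [[a _ ->] | [i _ ->]]; last by exists (natmul i z).
  have [n [s [hs ->]]] := normal_form a.
  exists (Ordinal (ltn_pmod n m0)) => //; rewrite coset_shift //.
  by apply/eqP; rewrite (coset_natmul_eq HS Hm) modn_mod.
rewrite card_imset ?card_ord // => i j /eqP.
by rewrite (coset_natmul_eq HS Hm) !modn_small // => /eqP/val_inj.
Qed.

End CentralGeneration.

Lemma period_prime S z m : maximal_subbrace B S -> central z -> z \notin S ->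
  0 < m -> (forall k, (natmul k z \in S) = (m %| k)) -> prime m.
Proof.
move=> Smax cz zS m0 Hm; have HS : subbrace B S by case: Smax.
apply/primeP; split.
  by rewrite ltn_neqAle m0 andbT; apply: contra zS => /eqP m1; rewrite -[z]natmul1 Hm -m1.
move=> d dm; apply/norP => -[d1 dnm].
have dzS : natmul d z \notin S.
  by rewrite Hm; apply: contra dnm => md; rewrite eqn_dvd dm md.
have [n [s [hs ez]]] := maximal_join_full Smax (central_natmul d cz) dzS z.
have /eqP ndm : n * d == 1 %[mod m].
  by rewrite -(coset_natmul_eq HS Hm) natmul1 {2}ez coset_shift // natmulM eqxx.
have : n * d == 1 %[mod d] by rewrite -(modn_dvdm _ dm) ndm modn_dvdm.
by rewrite modnMl eq_sym -/(d %| 1) dvdn1 (negbTE d1).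
Qed.

End GroupFacts.

Theorem theorem4p7 (T : finType) (B : skew_brace T) (S : {set T}) :
  maximal_subbrace B S ->
  centre B \subset S \/
  [/\ ideal B S, quotient_abelian B S & quotient_cyclic_prime_order B S].
Proof.
move=> Smax; have HS : subbrace B S by case: Smax.
have [|/subsetPn[z zc zS]] := boolP (centre B \subset S); first by left.
right; have cz := centre_central zc.
have normal_form := maximal_join_full Smax cz zS.
have [m m0 Hm] := exists_period HS z.
split; [exact: ideal_of_central_generation |
         exact: quotient_abelian_of_central_generation | split].
- rewrite (card_quotient_central_generation HS normal_form m0 Hm).
  exact: period_prime Smax cz zS m0 Hm.
- exists z => a; have [n [s [hs ->]]] := normal_form a.
  by exists n; rewrite coset_shift.
Qed.
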